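(* In the noiseless case $\alpha=0$, let $\mathbf{W}_t$ be the Muon iterates with learning rate $\eta=1$ started from $\mathbf{W}_0=\mathbf{0}$, and let $\widehat{\mathbf{W}}_t=\widetilde{\mathbf{E}}^\top\mathbf{W}_t\mathbf{E}$. Then for every $t\ge0$, partitioning $\widehat{\mathbf{W}}_t$ into $M^2$ blocks $(\mathbf{B}_t)_{i,j}\in\mathbb{R}^{C\times C}$ (block $(i,j)$ has rows $(i-1)C+1,\dots,iC$ and columns $(j-1)C+1,\dots,jC$): each diagonal block has the form $(\mathbf{B}_t)_{i,i}=\omega_{i,t}\mathbf{I}_C+\mu_{i,t}(\mathbf{J}_C-\mathbf{I}_C)$, and each off-diagonal block ($i\ne j$) has the form $(\mathbf{B}_t)_{i,j}=\gamma_{i,j,t}\mathbf{J}_C$, for real numbers $\omega_{i,t}=(\widehat{\mathbf{W}}_t)_{C(i-1)+1,C(i-1)+1}$, $\mu_{i,t}=(\widehat{\mathbf{W}}_t)_{C(i-1)+2,C(i-1)+1}$, $\gamma_{i,j,t}=(\widehat{\mathbf{W}}_t)_{C(i-1)+1,C(j-1)+1}$.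
   Context: Setup: $K=MC$ items in $M$ groups of $C\ge2$ items; $\widetilde p_1>\dots>\widetilde p_M>0$, $\sum_i\widetilde p_i=1$, $p_j=\widetilde p_i/C$ for $j\in\{(i-1)C+1,\dots,iC\}$. $\mathbf{E},\widetilde{\mathbf{E}}\in\mathbb{R}^{K\times K}$ are orthogonal with columns $\mathbf{E}_j,\widetilde{\mathbf{E}}_j$. Noiseless labels: $p_{i\mid j}=1$ if $i=j$, $0$ otherwise. $\widehat p_{i\mid j}(\mathbf{W})=\exp(\widetilde{\mathbf{E}}_i^\top\mathbf{W}\mathbf{E}_j)/\sum_k\exp(\widetilde{\mathbf{E}}_k^\top\mathbf{W}\mathbf{E}_j)$; $\mathcal{L}(\mathbf{W})=-\sum_jp_j\log\widehat p_{j\mid j}(\mathbf{W})$. Muon: $\mathbf{W}_{t+1}=\mathbf{W}_t-\eta\,\mathrm{msgn}(\nabla\mathcal{L}(\mathbf{W}_t))$, $\mathrm{msgn}(\mathbf{U}\boldsymbol\Sigma\mathbf{V}^\top)=\mathbf{U}\,\mathrm{sgn}(\boldsymbol\Sigma)\mathbf{V}^\top$. $\mathbf{J}_C$ is the $C\times C$ all-ones matrix. *)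

From HB Require Import structures.
From mathcomp Require Import all_boot all_order all_algebra.
From mathcomp Require Import all_classical all_reals all_analysis.
Set Implicit Arguments. Unset Strict Implicit. Unset Printing Implicit Defensive.
Import Order.TTheory GRing.Theory Num.Theory.
Import numFieldNormedType.Exports.
Local Open Scope ring_scope.

Section Defs.
Variables (R : realType) (M C : nat).
Local Notation K := (M * C)%N.

(* item index (i-1)C + r  (0-based: i*C + r) for group i, position r *)
Lemma item_proof (i : 'I_M) (r : 'I_C) : (i * C + r < K)%N.
Proof.
case: i r => i Hi [r Hr] /=.
apply: (@leq_trans (i * C + C)); first by rewrite ltn_add2l.
by rewrite -mulSnr leq_mul2r Hi orbT.
Qed.
Definition item (i : 'I_M) (r : 'I_C) : 'I_K := Ordinal (item_proof i r).

Lemma group_proof (j : 'I_K) : (j %/ C < M)%N.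
Proof. by case: j => j Hj /=; rewrite ltn_divLR ?Hj //; case: C Hj => //; rewrite muln0. Qed.
Definition group (j : 'I_K) : 'I_M := Ordinal (group_proof j).

Definition orthogonal_mx n (A : 'M[R]_n) : Prop := A^T *m A = 1%:M.

Definition logit (Et E W : 'M[R]_K) (i j : 'I_K) : R := (Et^T *m W *m E) i j.

Definition phat (Et E W : 'M[R]_K) (i j : 'I_K) : R :=
  expR (logit Et E W i j) / \sum_(k < K) expR (logit Et E W k j).

Definition pitem (pt : 'I_M -> R) (j : 'I_K) : R :=
  pt (group j) / C%:R.

Definition loss (pt : 'I_M -> R) (Et E W : 'M[R]_K) : R :=
  - \sum_(j < K) pitem pt j * ln (phat Et E W j j).

Definition is_gradient (f : 'M[R]_K -> R) (W G : 'M[R]_K) : Prop :=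
  forall a b : 'I_K,
    is_derive (0 : R) (1 : R) (fun s : R => f (W + s *: delta_mx a b)) (G a b).

(* S = msgn(G): for some SVD G = U Sigma V^T, S = U sgn(Sigma) V^T
   (msgn is independent of the chosen SVD). *)
Definition is_msgn n (G S : 'M[R]_n) : Prop :=
  exists (U V : 'M[R]_n) (d : 'rV[R]_n),
    orthogonal_mx U /\ orthogonal_mx V /\ (forall k, 0 <= d 0 k) /\
    G = U *m diag_mx d *m V^T /\
    S = U *m diag_mx (map_mx Num.sg d) *m V^T.

Definition muon_iterates (pt : 'I_M -> R) (Et E : 'M[R]_K) (eta : R)
  (W : nat -> 'M[R]_K) : Prop :=
  W 0%N = 0 /\
  forall t, exists G S, is_gradient (loss pt Et E) (W t) G /\ is_msgn G S /\
    W t.+1 = W t - eta *: S.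
End Defs.

(* Permuting the items of one group, simultaneously in the rows and columns
   of the logit matrix Et^T W E, leaves the loss invariant, because it only sees
   the diagonal logits, the column-wise softmax normalisers and the group
   weights.  Hence, at a W whose logit matrix has this symmetry, the gradient
   in logit coordinates has it too; and since msgn is unique and commutes with
   orthogonal conjugation (permutation matrices included), so does the Muon
   update.  Starting from W_0 = 0, every iterate is therefore invariant under
   all within-group transpositions, and such a matrix has the stated block
   form. *)

From Pilot Require Import Defs.
From HB Require Import structures.
From mathcomp Require Import all_boot all_order all_algebra.
From mathcomp Require Import all_classical all_reals all_analysis.
From mathcomp Require Import ring fingroup perm.
Import Order.TTheory GRing.Theory Num.Theory.
Import numFieldNormedType.Exports.
Local Open Scope ring_scope.
Set Implicit Arguments. Unset Strict Implicit. Unset Printing Implicit Defensive.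

Lemma trmx_delta_mulmxE (R : pzSemiRingType) (m n p q : nat)
    (A : 'M[R]_(m, p)) (B : 'M[R]_(n, q)) a b k j :
  (A^T *m delta_mx a b *m B) k j = A a k * B b j.
Proof.
rewrite mxE (bigD1 b) //= big1 ?addr0 => [|j' /negbTE nj']; last first.
  by rewrite mxE big1 ?mul0r // => i _; rewrite !mxE nj' andbF mulr0.
rewrite mxE (bigD1 a) //= big1 ?addr0 => [|i /negbTE ni]; last first.
  by rewrite !mxE ni mulr0.
by rewrite !mxE !eqxx mulr1.
Qed.

Lemma is_derive_unique (R : numFieldType) (V W : normedModType R) (f : V -> W)
    (x v : V) (df df' : W) :
  is_derive x v f df -> is_derive x v f df' -> df = df'.
Proof. by move=> [_ <-] [_ <-]. Qed.

Section LossDerivative.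
Variable R : realType.

Lemma sum_expR_gt0 n (L : 'I_n -> R) (k0 : 'I_n) : 0 < \sum_k expR (L k).
Proof.
rewrite (bigD1 k0) //= ltr_pwDl ?expR_gt0 //.
by apply: sumr_ge0 => k _; apply/ltW/expR_gt0.
Qed.

Lemma is_derive_affine (x a c : R) : is_derive x 1 (fun s : R => a + s * c) c.
Proof.
have := is_deriveD (is_derive_cst a x 1)
  (is_deriveM (is_derive_id x 1) (is_derive_cst c x 1)).
by rewrite /= scaler0 !add0r [c%:A]mulr1.
Qed.

Lemma is_derive_ln_sum_expR n (L c : 'I_n -> R) (k0 : 'I_n) :
  is_derive (0 : R) 1 (fun s => ln (\sum_k expR (L k + s * c k)))
    ((\sum_k expR (L k))^-1 * \sum_k c k * expR (L k)).
Proof.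
have -> : (fun s => ln (\sum_k expR (L k + s * c k))) =
    (@ln R) \o \sum_k (expR \o (fun s => L k + s * c k)).
  by apply/funext => s /=; rewrite fct_sumE.
apply: is_derive1_comp.
  rewrite fct_sumE; under eq_bigr do rewrite /= mul0r addr0.
  exact/is_derive1_ln/(sum_expR_gt0 _ k0).
apply: is_derive_sum => k; rewrite mulrC.
have := is_derive1_comp (is_derive_expR _) (is_derive_affine 0 (L k) (c k)).
by rewrite mul0r addr0.
Qed.

Section Gradient.
Variables (M C : nat) (pt : 'I_M -> R) (Et E : 'M[R]_(M * C)).
Local Notation K := (M * C)%N.

Definition logit_grad (W : 'M[R]_K) : 'M[R]_K :=
  \matrix_(k, j) (pitem pt j * (phat Et E W k j - (k == j)%:R)).

Lemma logitD (W D : 'M[R]_K) s k j :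
  logit Et E (W + s *: D) k j = logit Et E W k j + s * logit Et E D k j.
Proof. by rewrite /logit mulmxDr mulmxDl -scalemxAr -scalemxAl !mxE. Qed.

Lemma is_derive_ln_phat (W D : 'M[R]_K) j :
  is_derive (0 : R) 1 (fun s => ln (phat Et E (W + s *: D) j j))
    (logit Et E D j j - \sum_k phat Et E W k j * logit Et E D k j).
Proof.
set L := logit Et E W; set LD := logit Et E D.
have -> : (fun s => ln (phat Et E (W + s *: D) j j)) =
    (fun s => L j j + s * LD j j) -
    (fun s => ln (\sum_k expR (L k j + s * LD k j))).
  apply/funext => s /=; rewrite /phat logitD; under eq_bigr do rewrite logitD.
  rewrite ln_div ?expRK // posrE ?expR_gt0 //.
  exact: (sum_expR_gt0 (fun k => L k j + s * LD k j) j).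
apply: (is_derive_eq (is_deriveB (is_derive_affine _ _ _)
          (is_derive_ln_sum_expR (fun k => L k j) (fun k => LD k j) j))).
congr (_ - _); rewrite mulr_sumr; apply: eq_bigr => k _.
by rewrite /phat -/L; ring.
Qed.

Lemma is_derive_loss (W D : 'M[R]_K) :
  is_derive (0 : R) 1 (fun s => loss pt Et E (W + s *: D))
    (\sum_k \sum_j logit_grad W k j * logit Et E D k j).
Proof.
have -> : (fun s => loss pt Et E (W + s *: D)) =
    - \sum_j (pitem pt j \*: (fun s => ln (phat Et E (W + s *: D) j j))).
  by apply/funext => s; rewrite /loss /= fct_sumE.
apply: (is_derive_eq (is_deriveN (is_derive_sum (fun j =>
          is_deriveZ (pitem pt j) (is_derive_ln_phat W D j))))).
rewrite exchange_big -sumrN; apply: eq_bigr => j _.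
under eq_bigr do rewrite mxE -mulrA mulrBl mulrBr.
rewrite sumrB -!mulr_sumr [\sum_i (i == j)%:R * _](bigD1 j) //=.
rewrite [\sum_(i | i != j) _]big1 => [|k /negbTE ->]; last by rewrite mul0r.
by rewrite eqxx mul1r addr0 scalerBr opprB.
Qed.

Lemma is_gradient_lossE (W G : 'M[R]_K) :
  is_gradient (loss pt Et E) W G -> G = Et *m logit_grad W *m E^T.
Proof.
move=> gradG; apply/matrixP => a b.
rewrite (is_derive_unique (gradG a b) (is_derive_loss W (delta_mx a b))).
rewrite mxE exchange_big; apply: eq_bigr => j _; rewrite mxE mulr_suml.
by apply: eq_bigr => k _; rewrite /logit trmx_delta_mulmxE [E^T j b]mxE; ring.
Qed.

End Gradient.
End LossDerivative.

Definition perm_invariant (T : Type) n (s : {perm 'I_n}) (X : 'M[T]_n) :=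
  forall x y, X (s x) (s y) = X x y.

Lemma perm_mx_conj (R : pzRingType) (n : nat) (s : {perm 'I_n}) (X : 'M[R]_n) :
  perm_mx s *m X *m (perm_mx s)^T = \matrix_(x, y) X (s x) (s y).
Proof.
by rewrite -row_permE tr_perm_mx -col_permE; apply/matrixP => x y; rewrite !mxE.
Qed.

Section MatrixSign.
Variables (R : realType) (n : nat).
Implicit Types (P Q U V G S : 'M[R]_n) (d : 'rV[R]_n).

Lemma orthogonal_mx_mulmxT V : orthogonal_mx V -> V *m V^T = 1%:M.
Proof. exact: mulmx1C. Qed.

Lemma orthogonal_mxM P Q :
  orthogonal_mx P -> orthogonal_mx Q -> orthogonal_mx (P *m Q).
Proof.
by move=> oP oQ; rewrite /orthogonal_mx trmx_mul mulmxA -(mulmxA Q^T) oP mulmx1.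
Qed.

Lemma orthogonal_mx_tr V : orthogonal_mx V -> orthogonal_mx V^T.
Proof. by move=> oV; rewrite /orthogonal_mx trmxK orthogonal_mx_mulmxT. Qed.

Lemma diag_mx_map_commute d d' Q (f : R -> R) :
  (forall k, 0 <= d 0 k) -> (forall k, 0 <= d' 0 k) ->
  diag_mx d *m diag_mx d *m Q = Q *m diag_mx d' *m diag_mx d' ->
  diag_mx (map_mx f d) *m Q = Q *m diag_mx (map_mx f d').
Proof.
move=> d_ge0 d'_ge0 /matrixP sqrQ; apply/matrixP => k l.
rewrite mul_diag_mx mul_mx_diag !mxE.
have [->|Qkl_neq0] := eqVneq (Q k l) 0; first by rewrite mulr0 mul0r.
suff -> : d 0 k = d' 0 l by rewrite mulrC.
apply/eqP; rewrite -(eqrXn2 (ltn0Sn 1)) // -(inj_eq (mulIf Qkl_neq0)).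
move: (sqrQ k l); rewrite -mulmxA !mul_diag_mx !mul_mx_diag !mxE => sqrQkl.
by rewrite !expr2 -mulrA sqrQkl; apply/eqP; ring.
Qed.

Lemma gram_svd U V d : orthogonal_mx U ->
  (U *m diag_mx d *m V^T)^T *m (U *m diag_mx d *m V^T) =
  V *m (diag_mx d *m diag_mx d) *m V^T.
Proof.
move=> oU; rewrite !trmx_mul trmxK tr_diag_mx -!mulmxA.
by rewrite (mulmxA U^T) oU mul1mx.
Qed.

Lemma is_msgn_unique G S S' : is_msgn G S -> is_msgn G S' -> S = S'.
Proof.
move=> [U [V [d [oU [oV [d_ge0 [defG ->]]]]]]].
move=> [U' [V' [d' [oU' [oV' [d'_ge0 [defG' ->]]]]]]].
(* With Q := V^T V', G V' is both U' d' and U d Q = U Q d', so U' = U Q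
   wherever d' is nonzero, which is all that U' sgn(d') sees. *)
set Q := V^T *m V'.
have sqrQ : diag_mx d *m diag_mx d *m Q = Q *m diag_mx d' *m diag_mx d'.
  have := gram_svd V d oU; rewrite -defG defG' gram_svd // => gram.
  have /(congr1 (fun X => V^T *m X *m V')) := gram.
  by rewrite -!mulmxA oV' mulmx1 !mulmxA oV mul1mx => ->.
have commQ f := diag_mx_map_commute f d_ge0 d'_ge0 sqrQ.
have UQd : U' *m diag_mx d' = U *m Q *m diag_mx d'.
  have -> : U' *m diag_mx d' = G *m V' by rewrite defG' -mulmxA oV' mulmx1.
  rewrite defG -!mulmxA (mulmxA V^T) -/Q.
  by have := commQ id; rewrite !map_mx_id // => ->.
have UQsg :
    U' *m diag_mx (map_mx Num.sg d') = U *m Q *m diag_mx (map_mx Num.sg d').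
  apply/matrixP => a l; move/matrixP/(_ a l): UQd; rewrite !mul_mx_diag !mxE.
  have [->|d'l_neq0] := eqVneq (d' 0 l) 0; first by rewrite sgr0 !mulr0.
  by move/(mulIf d'l_neq0) ->.
by rewrite UQsg -(mulmxA U Q) -commQ /Q -!mulmxA orthogonal_mx_mulmxT ?mulmx1.
Qed.

Lemma is_msgn_conj G S P Q :
  is_msgn G S -> orthogonal_mx P -> orthogonal_mx Q ->
  is_msgn (P *m G *m Q^T) (P *m S *m Q^T).
Proof.
move=> [U [V [d [oU [oV [d_ge0 [-> ->]]]]]]] oP oQ.
exists (P *m U), (Q *m V), d; rewrite trmx_mul !mulmxA.
by do !split=> //; apply: orthogonal_mxM.
Qed.

Lemma orthogonal_perm_mx (s : {perm 'I_n}) :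
  orthogonal_mx (perm_mx s : 'M[R]_n).
Proof. by rewrite /orthogonal_mx tr_perm_mx -perm_mxM mulVg perm_mx1. Qed.

Lemma is_msgn_perm_invariant s G S :
  is_msgn G S -> perm_invariant s G -> perm_invariant s S.
Proof.
move=> msgnS invG.
have := is_msgn_conj msgnS (orthogonal_perm_mx s) (orthogonal_perm_mx s).
have -> : perm_mx s *m G *m (perm_mx s)^T = G.
  by rewrite perm_mx_conj; apply/matrixP => x y; rewrite mxE invG.
move/(is_msgn_unique msgnS)/matrixP => eqS x y.
by have := eqS x y; rewrite perm_mx_conj mxE.
Qed.

End MatrixSign.

Section MuonSymmetry.
Variables (R : realType) (M C : nat) (pt : 'I_M -> R) (Et E : 'M[R]_(M * C)).
Local Notation K := (M * C)%N.

Definition preserves_group (s : {perm 'I_K}) :=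
  forall x, Defs.group (s x) = Defs.group x.

Lemma logit_grad_perm_invariant (W : 'M[R]_K) s : preserves_group s ->
  perm_invariant s (Et^T *m W *m E) -> perm_invariant s (logit_grad pt Et E W).
Proof.
move=> sG invW x y; rewrite !mxE /pitem sG (inj_eq perm_inj) /phat /logit !invW.
by rewrite (reindex_inj (@perm_inj _ s)); under eq_bigr do rewrite invW.
Qed.

Lemma muon_iterates_perm_invariant eta W s :
  orthogonal_mx E -> orthogonal_mx Et -> muon_iterates pt Et E eta W ->
  preserves_group s -> forall t, perm_invariant s (Et^T *m W t *m E).
Proof.
move=> oE oEt [W0 Wstep] sG; elim=> [|t IH].
  by rewrite W0 mulmx0 mul0mx => x y; rewrite !mxE.
have [G [S [gradG [msgnS ->]]]] := Wstep t.
have msgnS' : is_msgn (logit_grad pt Et E (W t)) (Et^T *m S *m E).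
  have := is_msgn_conj msgnS (orthogonal_mx_tr oEt) (orthogonal_mx_tr oE).
  rewrite (is_gradient_lossE gradG) trmxK.
  by rewrite -!mulmxA oE mulmx1 !mulmxA oEt mul1mx.
have invS := is_msgn_perm_invariant msgnS' (logit_grad_perm_invariant sG IH).
have entryE (A B : 'M[R]_K) x y : (A - eta *: B) x y = A x y - eta * B x y.
  by rewrite !mxE.
by move=> x y; rewrite mulmxBr mulmxBl -scalemxAr -scalemxAl !entryE IH invS.
Qed.

End MuonSymmetry.

Section BlockStructure.
Variables (M C : nat).
Local Notation K := (M * C)%N.

Lemma group_item (i : 'I_M) (r : 'I_C) : Defs.group (item i r) = i.
Proof.
apply: val_inj => /=; have C_gt0 : (0 < C)%N by case: r => r /=; case: C.
by rewrite divnMDl // divn_small ?addn0.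
Qed.

Lemma eq_item (i j : 'I_M) (r s : 'I_C) :
  (item i r == item j s) = (i == j) && (r == s).
Proof.
apply/eqP/andP => [eq_rs|[/eqP -> /eqP ->]] //.
have eq_ij : i = j by rewrite -(group_item i r) eq_rs group_item.
split; apply/eqP => //; apply: val_inj.
by move: eq_rs; rewrite eq_ij => /(congr1 val) /= /addnI.
Qed.

Lemma tperm_item (i j : 'I_M) (r r' s : 'I_C) :
  tperm (item i r) (item i r') (item j s) =
  item j (if i == j then tperm r r' s else s).
Proof.
rewrite !permE /= !eq_item; have [<-|] //= := eqVneq i j.
by case: (s == r'); case: (s == r).
Qed.

Lemma preserves_group_tperm_item (i : 'I_M) (r r' : 'I_C) :
  preserves_group (tperm (item i r) (item i r')).
Proof. by move=> x; case: tpermP => [->|->|] //; rewrite !group_item. Qed.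

Lemma block_structure (T : Type) (X : 'M[T]_K) (c0 c1 : 'I_C) :
  c0 != c1 -> (forall i r r', perm_invariant (tperm (item i r) (item i r')) X) ->
  forall i j r s, X (item i r) (item j s) =
    if i == j then
      (if r == s then X (item i c0) (item i c0) else X (item i c1) (item i c0))
    else X (item i c0) (item j c0).
Proof.
move=> c01 invX i j r s.
have [<-|neq_ij] := eqVneq i j; last first.
  rewrite -(invX i r c0) !tperm_item eqxx (negbTE neq_ij) tpermL.
  by rewrite -(invX j s c0) !tperm_item eqxx eq_sym (negbTE neq_ij) tpermL.
have [<-|neq_rs] := eqVneq r s.
  by rewrite -(invX i r c0) !tperm_item eqxx tpermL.
(* Send s to c0, then the image r1 of r (which is not c0) to c1. *)
rewrite -(invX i s c0) !tperm_item eqxx tpermL.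
set r1 := tperm s c0 r.
have neq_r1c0 : r1 != c0.
  by rewrite -[c0](tpermL s c0) (inj_eq perm_inj).
by rewrite -(invX i r1 c1) !tperm_item eqxx tpermL tpermD // eq_sym.
Qed.

End BlockStructure.

Unset Implicit Arguments.

Theorem lemmaD2 (R : realType) (M C : nat) (pt : 'I_M -> R)
  (E Et : 'M[R]_(M * C)) (W : nat -> 'M[R]_(M * C)) :
  (2 <= C)%N ->
  (forall i j : 'I_M, (i < j)%N -> pt j < pt i) ->
  (forall i, 0 < pt i) ->
  \sum_(i < M) pt i = 1 ->
  orthogonal_mx E -> orthogonal_mx Et ->
  muon_iterates pt Et E 1 W ->
  forall (t : nat) (c0 c1 : 'I_C), nat_of_ord c0 = 0%N -> nat_of_ord c1 = 1%N ->
  forall (i j : 'I_M) (r s : 'I_C),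
    let Wh := Et^T *m W t *m E in
    Wh (item i r) (item j s) =
      if i == j then
        (if r == s then Wh (item i c0) (item i c0)   (* omega_{i,t} *)
         else Wh (item i c1) (item i c0))            (* mu_{i,t} *)
      else Wh (item i c0) (item j c0).               (* gamma_{i,j,t} *)
Proof.
move=> _ _ _ _ oE oEt iterW t c0 c1 c0_0 c1_1.
apply: block_structure; first by apply/eqP => /(congr1 val); rewrite /= c0_0 c1_1.
move=> i r r'; apply: (muon_iterates_perm_invariant oE oEt iterW).
exact: preserves_group_tperm_item.
Qed.
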